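(* In the basic function field $F=K(x,y)$, set $R=y/x^{q^k}$ and $S=y^{q^j}/x$. There exists a unique element $u\in F$ such that $$R=\mathrm{Tr}_k(u)+\alpha\quad\text{and}\quad S=-\mathrm{Tr}_j(u).$$ Moreover $K(u)=K(R,S)$ and $F=K(x,y)=K(x,u)=K(u,y)$.
   Context: Standing setup: $p$ is a prime, $q$ a power of $p$, $n\ge2$, $\ell=q^n$, and $K$ is either $\mathbb{F}_\ell$ or its algebraic closure $\overline{\mathbb{F}}_\ell$. For $a\ge1$, $\mathrm{Tr}_a(T)=T+T^q+\cdots+T^{q^{a-1}}$. Fix integers $j,k\ge1$ with $n=j+k$, $\gcd(j,k)=1$ and $p\nmid j$, and let $\alpha\in\mathbb{F}_p$ be the inverse of $j$ modulo $p$. The basic function field is $F=K(x,y)$ where $x$ is transcendental over $K$ and $y$ is algebraic over $K(x)$ with $\mathrm{Tr}_j(y/x^{q^k})+\mathrm{Tr}_k(y^{q^j}/x)=1$. *)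

From HB Require Import structures.
From mathcomp Require Import all_boot all_order all_algebra.
Set Implicit Arguments. Unset Strict Implicit. Unset Printing Implicit Defensive.
Import GRing.Theory.
Local Open Scope ring_scope.

Definition Tr (R : nzRingType) (q a : nat) (z : R) : R :=
  \sum_(i < a) z ^+ (q ^ i)%N.

Definition is_Fell_or_closure (ell : nat) (K : fieldType) : Prop :=
  (exists s : seq K, [/\ uniq s, size s = ell & forall a : K, a \in s])
  \/ (GRing.closed_field_axiom K /\
      forall a : K, exists m : nat, (0 < m)%N /\ a ^+ (ell ^ m)%N = a).

(* K(gens): the smallest subfield of F containing iota(K) and gens. *)
Definition in_gen_field (K F : fieldType) (iota : {rmorphism K -> F})
    (gens : seq F) (z : F) : Prop :=
  forall P : F -> Prop,
    (forall c : K, P (iota c)) ->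
    (forall g, g \in gens -> P g) ->
    (forall a b, P a -> P b -> P (a - b)) ->
    (forall a b, P a -> P b -> P (a * b)) ->
    (forall a, P a -> P a^-1) ->
    P z.

Definition transcendental_over (K F : fieldType) (iota : {rmorphism K -> F})
    (x : F) : Prop :=
  forall f : {poly K}, (map_poly iota f).[x] = 0 -> f = 0.

From HB Require Import structures.
From mathcomp Require Import all_boot all_order all_algebra.
From mathcomp Require Import zify.
Set Implicit Arguments. Unset Strict Implicit.
Import GRing.Theory.
Local Open Scope ring_scope.

(* Everything rests on one algebraic fact: z |-> z^q is additive, so the
   partial traces Tr_a are additive, commute with q-powers and satisfy the
   splitting rule  Tr_(a+b)(z) = Tr_a(z) + Tr_b(z)^(q^a).

   For coprime j, k >= 1 the system Tr_k(u) = r, Tr_j(u) = s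
       is solvable as soon as the compatibility condition Tr_j(r) = Tr_k(s)
       holds, and the solution is a ring expression in r and s.  The proof
       runs Euclid's algorithm on (j, k) using the splitting rule.
   (2) Uniqueness.  If Tr_j(w) = Tr_k(w) = 0 then w^(q^j) = w^(q^k) = w, hence
       w^q = w by Bezout, so Tr_j(w) = j w and w = 0 as p does not divide j.
   (3) Generated fields.  "z lies in K(gens)" is stable under the field
       operations and transitive in the generators, so the field equalities
       reduce to expressing generators through each other: u through R, S
       by (1); R, S through u by the trace equations; y = R x^(q^k) and
       x = y^(q^j) / S.
   The main theorem applies (1) to r = R - 1/j and s = -S; the compatibility
   condition is the defining equation Tr_j(R) + Tr_k(S) = 1 together with
   Tr_j(1/j) = 1. *)

Section AdditivePower.
Variables (A : nzRingType) (q : nat).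
Hypothesis powq_add : forall a b : A, (a + b) ^+ q = a ^+ q + b ^+ q.

(* Additivity of z^q forces q > 0: for q = 0 it would say 1 = 1 + 1. *)
Lemma powq_gt0 : (0 < q)%N.
Proof.
case: q powq_add => // /(_ 0 0); rewrite !expr0 => /eqP.
by rewrite eq_sym -subr_eq0 addrK oner_eq0.
Qed.

Lemma iter_powq_add i (a b : A) :
  (a + b) ^+ (q ^ i) = a ^+ (q ^ i) + b ^+ (q ^ i).
Proof.
elim: i => [|i IH]; first by rewrite !expn0 !expr1.
by rewrite expnS mulnC !exprM IH powq_add.
Qed.

Lemma iter_powq0 i : (0 : A) ^+ (q ^ i) = 0.
Proof. by rewrite expr0n expn_eq0 eqn0Ngt powq_gt0. Qed.

Lemma iter_powqN i (a : A) : (- a) ^+ (q ^ i) = - a ^+ (q ^ i).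
Proof.
by apply/eqP; rewrite -subr_eq0 opprK addrC -iter_powq_add subrr iter_powq0.
Qed.

Lemma iter_powq_sum i a (f : 'I_a -> A) :
  (\sum_(l < a) f l) ^+ (q ^ i) = \sum_(l < a) f l ^+ (q ^ i).
Proof.
elim: a f => [|a IH] f; first by rewrite !big_ord0 iter_powq0.
by rewrite !big_ord_recr /= iter_powq_add IH.
Qed.

Lemma iter_powq_nat i c : (c%:R : A) ^+ (q ^ i) = c%:R.
Proof.
elim: c => [|c IH]; first by rewrite iter_powq0.
by rewrite -addn1 natrD iter_powq_add IH expr1n.
Qed.

Lemma TrD a (u v : A) : Tr q a (u + v) = Tr q a u + Tr q a v.
Proof. by rewrite /Tr -big_split; apply: eq_bigr => l _; apply: iter_powq_add. Qed.

Lemma TrN a (u : A) : Tr q a (- u) = - Tr q a u.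
Proof. by rewrite /Tr -sumrN; apply: eq_bigr => l _; apply: iter_powqN. Qed.

Lemma TrB a (u v : A) : Tr q a (u - v) = Tr q a u - Tr q a v.
Proof. by rewrite TrD TrN. Qed.

Lemma Tr0 a : Tr q a (0 : A) = 0.
Proof. by rewrite /Tr big1 // => l _; rewrite iter_powq0. Qed.

Lemma Tr1 (z : A) : Tr q 1 z = z.
Proof. by rewrite /Tr big_ord1 expn0 expr1. Qed.

Lemma Tr_powq a i (z : A) : Tr q a (z ^+ (q ^ i)) = Tr q a z ^+ (q ^ i).
Proof. by rewrite /Tr iter_powq_sum; apply: eq_bigr => l _; rewrite -!exprM mulnC. Qed.

Lemma Tr_addn a b (z : A) : Tr q (a + b) z = Tr q a z + Tr q b z ^+ (q ^ a).
Proof.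
rewrite /Tr big_split_ord /= iter_powq_sum; congr (_ + _).
by apply: eq_bigr => l _; rewrite -exprM -expnD addnC.
Qed.

Lemma Tr_fixed a (w : A) : w ^+ q = w -> Tr q a w = w *+ a.
Proof.
move=> wq; have wqi i : w ^+ (q ^ i) = w.
  by elim: i => [|i IH]; rewrite ?expr1 // expnS exprM wq.
by rewrite /Tr (eq_bigr (fun _ => w)) ?sumr_const ?card_ord // => l _; apply: wqi.
Qed.

Definition rng_closed (P : A -> Prop) :=
  (forall a b, P a -> P b -> P (a - b)) /\ (forall a b, P a -> P b -> P (a * b)).

Lemma rng_closed_powq (P : A -> Prop) z i : rng_closed P -> P z -> P (z ^+ (q ^ i)).
Proof.
move=> [_ Pmul] Pz; have qi_gt0 : (0 < q ^ i)%N by rewrite expn_gt0 powq_gt0.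
rewrite -(prednK qi_gt0).
by elim: (q ^ i).-1 => [|m IH]; rewrite ?expr1 // exprS; apply: Pmul.
Qed.

Lemma trace_system_solvable j k (r s : A) :
  (0 < j)%N -> (0 < k)%N -> coprime j k -> Tr q j r = Tr q k s ->
  exists2 u, Tr q k u = r /\ Tr q j u = s &
    forall P, rng_closed P -> P r -> P s -> P u.
Proof.
move: {2}(j + k)%N (leqnn (j + k)) => n.
elim: n j k r s => [|n IH] j k r s; first by lia.
wlog le_jk : j k r s / (j <= k)%N => [hwlog|] hn hj hk hjk hrs.
  have [le_jk|lt_kj] := leqP j k; first exact: hwlog.
  have hkj : coprime k j by rewrite coprime_sym.
  have hn' : (k + j <= n.+1)%N by rewrite addnC.
  have [u [u_r u_s] Pu] := hwlog k j s r (ltnW lt_kj) hn' hk hj hkj (esym hrs).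
  by exists u => // P cP Ps Pr; apply: Pu.
have [eq_jk|lt_jk] := eqVneq j k.
  subst k; move: hjk; rewrite /coprime gcdnn => /eqP j1; subst j.
  by exists r => //; move: hrs; rewrite !Tr1 => ->.
have def_k : k = (k - j + j)%N by rewrite subnK.
set m := (k - j)%N in def_k.
have hm : (0 < m)%N by rewrite subn_gt0 ltn_neqAle lt_jk.
have hjm : coprime j m by move: hjk; rewrite def_k /coprime gcdnDr.
have hrs' : Tr q j (r - s ^+ (q ^ m)) = Tr q m s.
  by rewrite TrB Tr_powq hrs def_k Tr_addn addrK.
have hn' : (j + m <= n)%N by lia.
have [u [u_r u_s] Pu] := IH j m _ _ hn' hj hm hjm hrs'.
exists u; first by rewrite def_k Tr_addn u_r u_s subrK.
move=> P cP Pr Ps; apply: Pu => //; have [Psub _] := cP.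
by apply: Psub => //; apply: rng_closed_powq.
Qed.

End AdditivePower.

Section TraceKernel.
Variables (D : idomainType) (q : nat).
Hypothesis powq_add : forall a b : D, (a + b) ^+ q = a ^+ q + b ^+ q.

(* Comparing Tr_(a+1) and Tr_(1+a): a zero of Tr_a is fixed by z^(q^a). *)
Lemma Tr_eq0_fixed a (w : D) : Tr q a w = 0 -> w ^+ (q ^ a) = w.
Proof.
move=> Tw0; have := Tr_addn powq_add a 1 w.
by rewrite addnC Tr_addn // Tw0 iter_powq0 // addr0 add0r !Tr1 => <-.
Qed.

Lemma fixed_iter a c (w : D) : w ^+ (q ^ a) = w -> w ^+ (q ^ (a * c)) = w.
Proof.
move=> wa; elim: c => [|c IH]; first by rewrite muln0 expn0 expr1.
by rewrite mulnS expnD exprM wa IH.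
Qed.

Lemma trace_kernel_trivial j k (w : D) :
  (0 < j)%N -> coprime j k -> j%:R != 0 :> D ->
  Tr q j w = 0 -> Tr q k w = 0 -> w = 0.
Proof.
move=> hj hjk hjD Tjw Tkw.
have [wj wk] := (Tr_eq0_fixed Tjw, Tr_eq0_fixed Tkw).
(* Bezout: 1 + c k = j d, so w^q = w^(q^(1 + c k)) = w^(q^(j d)) = w. *)
have [c _ hc] := Bezoutl k hj; rewrite (eqP hjk) in hc.
have def_jd : (1 + c * k = j * ((1 + c * k) %/ j))%N.
  by rewrite [RHS]mulnC divnK.
have wq : w ^+ q = w.
  have := fixed_iter ((1 + c * k) %/ j) wj.
  by rewrite -def_jd addnC expnD exprM mulnC fixed_iter // expn1.
move: Tjw; rewrite Tr_fixed // -mulr_natr => /eqP.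
by rewrite mulf_eq0 (negbTE hjD) orbF => /eqP.
Qed.

Lemma trace_system_unique j k (u v : D) :
  (0 < j)%N -> coprime j k -> j%:R != 0 :> D ->
  Tr q k u = Tr q k v -> Tr q j u = Tr q j v -> u = v.
Proof.
move=> hj hjk hjD Tk Tj; apply/eqP; rewrite -subr_eq0; apply/eqP.
by apply: (trace_kernel_trivial hj hjk hjD); rewrite TrB // ?Tk ?Tj subrr.
Qed.

End TraceKernel.

Section GeneratedField.
Variables (K F : fieldType) (iota : {rmorphism K -> F}).
Implicit Types (gens : seq F) (a b z : F).

Lemma gen_const gens c : in_gen_field iota gens (iota c).
Proof. by move=> P PK _ _ _ _; apply: PK. Qed.

Lemma gen_mem gens g : g \in gens -> in_gen_field iota gens g.
Proof. by move=> gin P _ Pg _ _ _; apply: Pg. Qed.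

Lemma gen_sub gens a b :
  in_gen_field iota gens a -> in_gen_field iota gens b ->
  in_gen_field iota gens (a - b).
Proof.
by move=> Ga Gb P PK Pg Psub Pmul Pinv; apply: (Psub); [apply: (Ga P) | apply: (Gb P)].
Qed.

Lemma gen_mul gens a b :
  in_gen_field iota gens a -> in_gen_field iota gens b ->
  in_gen_field iota gens (a * b).
Proof.
by move=> Ga Gb P PK Pg Psub Pmul Pinv; apply: (Pmul); [apply: (Ga P) | apply: (Gb P)].
Qed.

Lemma gen_inv gens a : in_gen_field iota gens a -> in_gen_field iota gens a^-1.
Proof. by move=> Ga P PK Pg Psub Pmul Pinv; apply: (Pinv); apply: (Ga P). Qed.

Lemma gen_rng_closed gens : rng_closed (in_gen_field iota gens).
Proof. by split; [apply: gen_sub | apply: gen_mul]. Qed.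

Lemma gen_opp gens a : in_gen_field iota gens a -> in_gen_field iota gens (- a).
Proof. by move=> Ga; rewrite -sub0r -(rmorph0 iota); apply: gen_sub Ga; apply: gen_const. Qed.

Lemma gen_add gens a b :
  in_gen_field iota gens a -> in_gen_field iota gens b ->
  in_gen_field iota gens (a + b).
Proof. by move=> Ga Gb; rewrite -[b]opprK; apply: gen_sub Ga _; apply: gen_opp. Qed.

Lemma gen_exp gens z m : in_gen_field iota gens z -> in_gen_field iota gens (z ^+ m).
Proof.
move=> Gz; elim: m => [|m IH]; first by rewrite expr0 -(rmorph1 iota); apply: gen_const.
by rewrite exprS; apply: gen_mul.
Qed.

Lemma gen_Tr gens q m z : in_gen_field iota gens z -> in_gen_field iota gens (Tr q m z).
Proof.
move=> Gz; elim: m => [|m IH].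
  by rewrite /Tr big_ord0 -(rmorph0 iota); apply: gen_const.
by rewrite /Tr big_ord_recr /=; apply: gen_add IH _; apply: gen_exp.
Qed.

Lemma gen_mem1 a : in_gen_field iota [:: a] a.
Proof. by apply: gen_mem; rewrite inE. Qed.

Lemma gen_mem2l a b : in_gen_field iota [:: a; b] a.
Proof. by apply: gen_mem; rewrite !inE eqxx. Qed.

Lemma gen_mem2r a b : in_gen_field iota [:: a; b] b.
Proof. by apply: gen_mem; rewrite !inE eqxx orbT. Qed.

Lemma gen_trans gens gens' z :
  (forall g, g \in gens -> in_gen_field iota gens' g) ->
  in_gen_field iota gens z -> in_gen_field iota gens' z.
Proof.
move=> sub_gens Gz; apply: Gz; [exact: gen_const | exact: sub_gens |
  exact: gen_sub | exact: gen_mul | exact: gen_inv].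
Qed.

Lemma gen_trans1 gens a z :
  in_gen_field iota gens a -> in_gen_field iota [:: a] z -> in_gen_field iota gens z.
Proof. by move=> Ga; apply: gen_trans => g; rewrite inE => /eqP ->. Qed.

Lemma gen_trans2 gens a b z :
  in_gen_field iota gens a -> in_gen_field iota gens b ->
  in_gen_field iota [:: a; b] z -> in_gen_field iota gens z.
Proof. by move=> Ga Gb; apply: gen_trans => g; rewrite !inE => /orP[] /eqP ->. Qed.

Lemma gen_all_from_quot_l gens x y m :
  x != 0 -> (forall z, in_gen_field iota [:: x; y] z) ->
  in_gen_field iota gens x -> in_gen_field iota gens (y / x ^+ m) ->
  forall z, in_gen_field iota gens z.
Proof.
move=> x0 gen_xy Gx Gquot z; apply: gen_trans2 (gen_xy z) => //.
by rewrite -[y](divfK (expf_neq0 m x0)); apply: gen_mul Gquot (gen_exp _ Gx).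
Qed.

Lemma gen_all_from_quot_r gens x y m :
  y != 0 -> (forall z, in_gen_field iota [:: x; y] z) ->
  in_gen_field iota gens y -> in_gen_field iota gens (y ^+ m / x) ->
  forall z, in_gen_field iota gens z.
Proof.
move=> y0 gen_xy Gy Gquot z; apply: gen_trans2 (gen_xy z) => //.
rewrite -[x](divKf (expf_neq0 m y0) x).
by apply: gen_mul (gen_exp _ Gy) (gen_inv Gquot).
Qed.

End GeneratedField.

Arguments gen_mem1 {K F iota} a.
Arguments gen_mem2l {K F iota} a b.
Arguments gen_mem2r {K F iota} a b.

Lemma pchar_powq_add (A : comNzRingType) p e (a b : A) :
  p \in [pchar A] -> (a + b) ^+ (p ^ e) = a ^+ (p ^ e) + b ^+ (p ^ e).
Proof.
move=> pA; apply: exprDn_pchar.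
by rewrite pnatX (pnatE _ (pcharf_prime pA)) pA.
Qed.

(* 1/j has trace 1 under Tr_j, as it is fixed by the q-power map. *)
Lemma Tr_inv_nat (F : fieldType) q j :
  (forall a b : F, (a + b) ^+ q = a ^+ q + b ^+ q) -> j%:R != 0 :> F ->
  Tr q j (j%:R^-1 : F) = 1.
Proof.
move=> powq_add jF; rewrite Tr_fixed; first by rewrite -[RHS](mulVf jF) mulr_natr.
by rewrite exprVn -[q]expn1 iter_powq_nat.
Qed.

Lemma transcendental_neq0 (K F : fieldType) (iota : {rmorphism K -> F}) x :
  transcendental_over iota x -> x != 0.
Proof.
move=> trx; apply/eqP => x0; have := trx 'X.
by rewrite map_polyX hornerX x0 => /(_ erefl) /eqP; rewrite polyX_eq0.
Qed.

Theorem proposition2p2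
  (p e j k : nat) (K F : fieldType) (iota : {rmorphism K -> F}) (x y : F) :
  prime p -> (0 < e)%N ->
  let q := (p ^ e)%N in
  let n := (j + k)%N in
  let ell := (q ^ n)%N in
  (2 <= n)%N -> (1 <= j)%N -> (1 <= k)%N ->
  coprime j k -> ~~ (p %| j)%N ->
  p \in [pchar K] ->
  is_Fell_or_closure ell K ->
  transcendental_over iota x ->
  Tr q j (y / x ^+ (q ^ k)%N) + Tr q k (y ^+ (q ^ j)%N / x) = 1 ->
  (forall z : F, in_gen_field iota [:: x; y] z) ->
  let alpha : F := (j%:R)^-1 in
  let R := y / x ^+ (q ^ k)%N in
  let S := y ^+ (q ^ j)%N / x in
  exists u : F,
    [/\ R = Tr q k u + alpha /\ S = - Tr q j u,
        (forall v : F, R = Tr q k v + alpha /\ S = - Tr q j v -> v = u),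
        (forall z : F, in_gen_field iota [:: u] z <-> in_gen_field iota [:: R; S] z),
        (forall z : F, in_gen_field iota [:: x; u] z)
      & (forall z : F, in_gen_field iota [:: u; y] z)].
Proof.
move=> _ _ q _ _ _ hj hk hjk hpj pK _ trx trRS gen_xy alpha R S.
have pF := rmorph_pchar iota pK.
have powq_add (a b : F) := pchar_powq_add e a b pF.
have jF : j%:R != 0 :> F by rewrite -(dvdn_pcharf pF).
have compat : Tr q j (R - alpha) = Tr q k (- S).
  by rewrite !(TrB, TrN) // Tr_inv_nat // -trRS opprD addrA subrr add0r.
have [u [u_R u_S] u_min] := trace_system_solvable powq_add hj hk hjk compat.
have def_R : R = Tr q k u + alpha by rewrite u_R subrK.
have def_S : S = - Tr q j u by rewrite u_S opprK.
have alpha_gen gens : in_gen_field iota gens alpha.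
  by rewrite /alpha -(rmorph_nat iota) -fmorphV; apply: gen_const.
have RS_gen gens : in_gen_field iota gens u ->
    in_gen_field iota gens R /\ in_gen_field iota gens S.
  by move=> Gu; rewrite def_R def_S; split; [apply: gen_add | apply: gen_opp];
    rewrite ?alpha_gen //; apply: gen_Tr.
have u_gen : in_gen_field iota [:: R; S] u.
  apply: (u_min (in_gen_field iota [:: R; S])); first exact: gen_rng_closed.
    exact: gen_sub (gen_mem2l _ _) (alpha_gen _).
  exact: gen_opp (gen_mem2r _ _).
have x0 := transcendental_neq0 trx.
have y0 : y != 0.
  apply: contra_eq_neq trRS => ->.
  by rewrite mul0r iter_powq0 // mul0r !Tr0 // addr0 eq_sym oner_neq0.
exists u; split => // [v [v_R v_S] | z | z | z].
- apply: (trace_system_unique powq_add hj hjk jF).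
    by apply: (addIr alpha); rewrite -v_R.
  by apply: oppr_inj; rewrite -v_S.
- split; first exact: gen_trans1.
  by have [GR GS] := RS_gen _ (gen_mem1 u); apply: gen_trans2.
- apply: (gen_all_from_quot_l x0 gen_xy (gen_mem2l x u)).
  exact: (RS_gen _ (gen_mem2r x u)).1.
- apply: (gen_all_from_quot_r y0 gen_xy (gen_mem2r u y)).
  exact: (RS_gen _ (gen_mem2l u y)).2.
Qed.
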